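(* Let $q$ be a prime power and $n,k,\alpha$ positive integers with $k\mid n$, $\alpha\ge3$ and $n\ge\alpha k$. Then $$B_q(n,k,(\alpha-1)k;\alpha)\ge q^{\frac{n-\alpha k+1}{\alpha-1}}.$$
   Context: For a prime power $q$, $\mathcal{G}_q(n,k)$ denotes the set of all $k$-dimensional subspaces of $\mathbb{F}_q^n$. An $\alpha$-$(n,k,\delta)_q^c$ covering Grassmannian code is a subset $\mathcal{C}\subseteq\mathcal{G}_q(n,k)$ (no repeated codewords) such that every set of $\alpha$ distinct codewords of $\mathcal{C}$ spans a subspace of $\mathbb{F}_q^n$ of dimension at least $k+\delta$. $B_q(n,k,\delta;\alpha)$ denotes the maximum size of an $\alpha$-$(n,k,\delta)_q^c$ code. *)

From HB Require Import structures.
From mathcomp Require Import all_boot all_order all_algebra all_field.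
From Stdlib Require Import Reals.
Set Implicit Arguments. Unset Strict Implicit. Unset Printing Implicit Defensive.
Import GRing.Theory.

(* F^n is modelled as the row vectors 'rV[F]_n; G_q(n,k) as the subspaces
   U : {vspace 'rV[F]_n} with \dim U = k. *)
Definition covering_code (F : fieldType) (n k delta alpha : nat)
    (C : seq {vspace 'rV[F]_n}) : Prop :=
  [/\ uniq C,
      (forall U, U \in C -> \dim U = k) &
      (forall S : seq {vspace 'rV[F]_n}, uniq S -> size S = alpha ->
         {subset S <= C} -> k + delta <= \dim (\sum_(U <- S) U)%VS)].

(* B_q(n,k,delta;alpha) >= x  :<->  some covering code has size >= x. *)
Definition B_ge (F : finFieldType) (n k delta alpha : nat) (x : R) : Prop :=
  exists C : seq {vspace 'rV[F]_n},
    @covering_code F n k delta alpha C /\ (x <= INR (size C))%R.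

From HB Require Import structures.
From mathcomp Require Import all_boot all_order all_algebra all_field.
From mathcomp Require Import zify.

(* Call a list of k-dimensional subspaces a-independent when any at most a+1
   of its members form a direct sum; such a list is a covering code with
   alpha = a+1 and delta = a k.  It is built greedily: given N codewords, a
   k x n matrix M such that no nonzero combination c M lies in a sum of
   min(a, N) codewords has a row space that can be added.  Counting pairs
   (M, (s, c)) with c M in the s-th sum shows that such an M exists while
   C(N,a) (q^k - 1) q^(a k) < (q - 1) q^n, because every bad M carries at least
   q - 1 of them (scale c).  At the first N where this fails,
   N^a >= 2 C(N,a) > q^(n - (a+1) k + 1). *)

Set Implicit Arguments. Unset Strict Implicit. Unset Printing Implicit Defensive.
Import GRing.Theory.

Lemma ffact_leq_expn n m : n ^_ m <= n ^ m.
Proof.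
elim: m => [|m IH]; first by rewrite ffactn0.
by rewrite ffactnSr expnSr leq_mul // leq_subr.
Qed.

Lemma double_bin_leq_expn N a : 1 < a -> 2 * 'C(N, a) <= N ^ a.
Proof.
move=> a_gt1; apply: leq_trans (ffact_leq_expn N a).
rewrite -bin_ffact mulnC leq_mul2l (leq_trans a_gt1) ?fact_geq ?orbT //.
Qed.

Lemma ltn_bin_addn T b : 0 < b -> T < 'C(T + b, b).
Proof.
case: b => // b _; elim: b => [|b IH]; first by rewrite addn1 bin1.
by rewrite addnS binS (leq_trans IH) ?leq_addl.
Qed.

Lemma expn_sub1_mul_ltn q k a n : 1 < q -> a.+1 * k <= n ->
  (q ^ k - 1) * q ^ (a * k) < (q - 1) * q ^ n.
Proof.
move=> q_gt1 akn.
have qk_gt0 : 0 < q ^ k by rewrite expn_gt0 ltnW.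
have qak_gt0 : 0 < q ^ (a * k) by rewrite expn_gt0 ltnW.
have : q ^ k * q ^ (a * k) <= q ^ n by rewrite -expnD leq_exp2l // addnC -mulSn.
nia.
Qed.

Lemma greedy_stop_bound q k a n Cb : 1 < q -> a.+1 * k <= n ->
  (q - 1) * q ^ n <= Cb * (q ^ k - 1) * q ^ (a * k) ->
  q ^ (n - a.+1 * k).+1 < 2 * Cb.
Proof.
move=> q_gt1 akn.
have -> : q ^ n = q ^ (n - a.+1 * k) * q ^ (a * k) * q ^ k.
  by rewrite -!expnD -addnA -mulSnr subnK.
rewrite expnS.
have qk_gt0 : 0 < q ^ k by rewrite expn_gt0 ltnW.
have qak_gt0 : 0 < q ^ (a * k) by rewrite expn_gt0 ltnW.
have qe_gt0 : 0 < q ^ (n - a.+1 * k) by rewrite expn_gt0 ltnW.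
move: (q ^ (n - _)) (q ^ (a * k)) (q ^ k) qe_gt0 qak_gt0 qk_gt0.
move=> Q Y X Q_gt0 Y_gt0 X_gt0 le_cnt.
have Cb_gt0 : 0 < Cb.
  by case: Cb le_cnt => //; rewrite !mul0n leqn0 !muln_eq0; lia.
have : (q - 1) * Q * (Y * X) < Cb * (Y * X).
  apply: leq_ltn_trans (_ : _ <= Cb * (X - 1) * Y) _; first by move: le_cnt; rewrite !mulnA.
  rewrite [Y * X]mulnC mulnA ltn_pmul2r // ltn_pmul2l //; lia.
rewrite ltn_pmul2r ?muln_gt0 ?Y_gt0 //; nia.
Qed.

Lemma exists_superset_card (T : finType) (A : {set T}) j :
  #|A| <= j <= #|T| -> exists2 B : {set T}, A \subset B & #|B| = j.
Proof.
elim: j => [|j IH] /andP [Aj jT]; first by exists A => //; apply/eqP; rewrite -leqn0.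
case: (ltngtP #|A| j.+1) Aj => [ltAj _ | // | eqAj _]; last by exists A.
have [B AB cardB] : exists2 B : {set T}, A \subset B & #|B| = j.
  by apply: IH; rewrite -ltnS ltAj ltnW.
have /set0Pn [x] : ~: B != set0 by rewrite -card_gt0 cardsCs setCK cardB subn_gt0.
rewrite inE => xB.
by exists (x |: B); [exact: subset_trans AB (subsetUr _ _) | rewrite cardsU1 xB cardB].
Qed.

Section MulmxCount.
Variables (F : finFieldType) (k n : nat).
Local Notation q := #|F|.
Local Open Scope ring_scope.

Lemma mulmx_onto (c : 'rV[F]_k) (w : 'rV[F]_n) : c != 0 ->
  exists D : 'M[F]_(k, n), c *m D = w.
Proof.
move=> c0; have [j cj0] : exists j, c 0 j != 0.
  apply/existsP; apply: contraR c0 => /existsPn cj0.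
  by apply/eqP/rowP => j; rewrite mxE; apply/eqP/negbNE/cj0.
exists ((c 0 j)^-1 *: (delta_mx j 0 *m w)).
rewrite -scalemxAr mulmxA -colE (mx11_scalar (col j c)) !mxE mul_scalar_mx.
by rewrite scalerA mulVf // scale1r.
Qed.

Lemma card_mulmx_fibre (c : 'rV[F]_k) (w : 'rV[F]_n) : c != 0 ->
  #|[set M : 'M[F]_(k, n) | c *m M == w]| = #|[set M : 'M[F]_(k, n) | c *m M == 0]|.
Proof.
move=> /(mulmx_onto w) [D cD].
rewrite -[RHS](card_imset _ (addIr D)); apply: eq_card => M; rewrite [in LHS]inE.
apply/eqP/imsetP => [cMw|[M0 + ->]]; last by rewrite inE mulmxDr cD => /eqP ->; rewrite add0r.
by exists (M - D); rewrite ?inE ?mulmxBr ?cMw ?cD ?subrr // subrK.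
Qed.

Lemma card_mulmx_preim (c : 'rV[F]_k) (A : {pred 'rV[F]_n}) : c != 0 ->
  #|[set M : 'M[F]_(k, n) | c *m M \in A]| =
  (#|A| * #|[set M : 'M[F]_(k, n) | c *m M == 0%R]|)%N.
Proof.
move=> c0; rewrite -sum1_card (partition_big (mulmx c) (mem A)) => [|M]; last by rewrite inE.
rewrite -sum_nat_const; apply: eq_bigr => w wA.
rewrite -(card_mulmx_fibre w c0) -sum1_card; apply: eq_bigl => M.
by rewrite !inE; apply: andb_idl => /eqP ->.
Qed.

Lemma card_mulmx_in_vspace (c : 'rV[F]_k) (W : {vspace 'rV[F]_n}) : c != 0 ->
  (#|[set M : 'M[F]_(k, n) | c *m M \in W]| * q ^ n = q ^ \dim W * q ^ (k * n))%N.
Proof.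
move=> c0; have total := card_mulmx_preim [set: 'rV[F]_n] c0.
rewrite (_ : [set M | _] = setT) ?cardsT ?card_mx ?mul1n in total; last first.
  by apply/setP => M; rewrite !inE.
by rewrite card_mulmx_preim // card_vspace total -mulnA [(_ * q ^ n)%N]mulnC.
Qed.
End MulmxCount.

Section AvoidingMatrix.
Variables (F : finFieldType) (k n d : nat) (I : finType) (P : pred I).
Variable W : I -> {vspace 'rV[F]_n}.
Hypothesis dimW : forall i, P i -> (\dim (W i) <= d)%N.
Local Notation q := #|F|.
Local Open Scope ring_scope.

Definition hitting_pairs (M : 'M[F]_(k, n)) :=
  [set p : I * 'rV[F]_k | [&& P p.1, p.2 != 0 & p.2 *m M \in W p.1]].

Lemma card_hitting_pairs_ge M :
  hitting_pairs M != set0 -> (q - 1 <= #|hitting_pairs M|)%N.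
Proof.
case/set0Pn => -[i c]; rewrite inE /= => /and3P [Pi c0 cMW].
rewrite subn1 -(cardsC1 (0 : F)) -(card_imset _ (f := fun l => (i, l *: c))); last first.
  move=> l l' [/eqP]; rewrite -subr_eq0 -scalerBl scaler_eq0 (negbTE c0) orbF.
  by rewrite subr_eq0 => /eqP.
apply/subset_leq_card/subsetP => _ /imsetP [l l0 ->]; rewrite !inE in l0 *.
by rewrite /= Pi scaler_eq0 negb_or l0 c0 -scalemxAl memvZ.
Qed.

Lemma sum_card_hitting_pairs :
  ((\sum_M #|hitting_pairs M|) * q ^ n <= #|P| * (q ^ k - 1) * q ^ d * q ^ (k * n))%N.
Proof.
have -> : (\sum_M #|hitting_pairs M| = \sum_p #|[set M | p \in hitting_pairs M]|)%N.
  under eq_bigr do rewrite -sum1_card big_mkcond /=.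
  by rewrite exchange_big; under eq_bigr do rewrite -big_mkcond sum1dep_card.
rewrite big_distrl /= (@leq_trans (\sum_(p in [predX P & predC1 (0%R : 'rV[F]_k)])
                                      q ^ d * q ^ (k * n)))%N //.
  rewrite [X in (_ <= X)%N]big_mkcond; apply: leq_sum => -[i c] _ /=.
  rewrite !inE /=; case: (boolP (P i && (c != 0))) => [/andP [Pi c0] | not_Pc].
    rewrite (_ : [set M | _] = [set M : 'M[F]_(k, n) | c *m M \in W i]); last first.
      by apply/setP => M; rewrite !inE /= Pi c0.
    by rewrite card_mulmx_in_vspace // leq_mul2r leq_exp2l ?dimW ?finNzRing_gt1 ?orbT.
  rewrite (_ : [set M | _] = set0) ?cards0 //; apply/setP => M; rewrite !inE /=.
  by apply: contraNF not_Pc => /and3P [-> ->].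
by rewrite sum_nat_const cardX cardC1 card_mx mul1n subn1 !mulnA.
Qed.

Lemma exists_mx_avoiding :
  (#|P| * (q ^ k - 1) * q ^ d < (q - 1) * q ^ n)%N ->
  exists M : 'M[F]_(k, n), forall i c, P i -> c != 0 -> c *m M \notin W i.
Proof.
move=> lt_count.
have [M hitM | hit] := pickP [pred M | hitting_pairs M == set0].
  exists M => i c Pi c0; apply: contraTN hitM => cMW.
  by apply/set0Pn; exists (i, c); rewrite inE Pi c0.
have lb : (q ^ (k * n) * (q - 1) <= \sum_M #|hitting_pairs M|)%N.
  rewrite -card_mx -sum_nat_const; apply: leq_sum => M _.
  exact/card_hitting_pairs_ge/negbT/hit.
have := leq_trans (leq_mul lb (leqnn (q ^ n))) sum_card_hitting_pairs.
rewrite -mulnA mulnC leq_pmul2r ?expn_gt0 ?(ltnW (finNzRing_gt1 F)) //.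
by rewrite leqNgt lt_count.
Qed.
End AvoidingMatrix.

Section RowVspace.
Variables (F : fieldType) (k n : nat).
Local Open Scope ring_scope.

Definition row_vspace (M : 'M[F]_(k, n)) : {vspace 'rV[F]_n} := limg (linfun (mulmxr M)).

Lemma row_vspaceP (M : 'M[F]_(k, n)) (v : 'rV[F]_n) :
  reflect (exists c, v = c *m M) (v \in row_vspace M).
Proof.
apply: (iffP memv_imgP) => [[c _ ->]|[c ->]]; exists c; rewrite ?lfunE ?memvf //.
Qed.

Lemma dim_row_vspace (M : 'M[F]_(k, n)) :
  (forall c : 'rV_k, c *m M = 0 -> c = 0) -> \dim (row_vspace M) = k.
Proof.
move=> inj; rewrite limg_dim_eq ?dimvf /dim /= ?mul1n // capfv; apply/eqP/lker0P => c c'.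
rewrite !lfunE /= => /eqP; rewrite -subr_eq0 -mulmxBl => /eqP/inj/eqP.
by rewrite subr_eq0 => /eqP.
Qed.
End RowVspace.

Lemma sum_sub_draw (K : fieldType) (vT : vectType K) (C S : seq {vspace vT}) m :
  uniq C -> size S <= m <= size C -> {subset S <= C} ->
  exists2 s : {set 'I_(size C)}, #|s| = m &
    (\sum_(V <- S) V <= \sum_(i in s) nth 0%VS C i)%VS.
Proof.
move=> uC /andP [Sm mC] SC.
pose s0 := [set i : 'I_(size C) | nth 0%VS C i \in S].
have s0m : #|s0| <= m.
  have -> : #|s0| = count (mem S) C.
    rewrite -sum1_card (eq_bigl (fun i : 'I_(size C) => nth 0%VS C i \in S)); last first.
      by move=> i; rewrite inE.
    by rewrite -sum1_count (big_nth 0%VS) big_mkord.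
  rewrite -size_filter (leq_trans _ Sm) // uniq_leq_size ?filter_uniq // => V.
  by rewrite mem_filter => /andP [].
have [s s0s sm] : exists2 s : {set 'I_(size C)}, s0 \subset s & #|s| = m.
  by apply: exists_superset_card; rewrite s0m card_ord.
exists s => //; rewrite big_seq.
apply: (big_ind (fun X => X <= _)%VS) => [|X Y XW YW|V VS]; first exact: sub0v.
  by rewrite subv_add XW YW.
have iV : index V C < size C by rewrite index_mem SC.
apply: (sumv_sup (Ordinal iV)); last by rewrite /= nth_index ?SC.
by apply: (subsetP s0s); rewrite inE /= nth_index ?SC.
Qed.

Section IndependentCodes.
Variables (F : fieldType) (n k a : nat).

Definition independent_code (C : seq {vspace 'rV[F]_n}) : Prop :=
  [/\ uniq C, (forall U, U \in C -> \dim U = k) &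
      (forall S : seq {vspace 'rV[F]_n}, uniq S -> size S <= a.+1 -> {subset S <= C} ->
         k * size S <= \dim (\sum_(U <- S) U))].

Lemma independent_code_nil : independent_code [::].
Proof.
split=> // -[|U S] _ _ SC; first by rewrite muln0.
by have := SC U (mem_head U S).
Qed.

Lemma independent_code_covering C :
  independent_code C -> covering_code k (a * k) a.+1 C.
Proof.
by case=> uC dimC indC; split=> // S uS sizeS /(indC S uS); rewrite sizeS mulnC -mulSn => ->.
Qed.

Lemma independent_code_cons C U : 0 < k -> 0 < a ->
  independent_code C -> \dim U = k ->
  (forall S, uniq S -> size S <= a -> {subset S <= C} -> (U :&: \sum_(V <- S) V = 0)%VS) ->
  independent_code (U :: C).
Proof.
move=> k_gt0 a_gt0 [uC dimC indC] dimU disjU.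
have notUC : U \notin C.
  apply/negP => UC.
  have U0 : U = 0%VS.
    have := disjU [:: U] isT a_gt0; rewrite big_seq1 capvv; apply=> V.
    by rewrite inE => /eqP ->.
  by move: k_gt0; rewrite -dimU U0 dimv0.
split=> [|V|S uS sizeS SUC]; first by rewrite /= notUC.
  by rewrite inE => /predU1P [->|/dimC].
have [US | notUS] := boolP (U \in S); last first.
  by apply: indC => // V VS; case/predU1P: (SUC V VS) notUS => [<-|//]; rewrite VS.
have eqS := perm_to_rem US; set S' := rem U S in eqS.
have S'C : {subset S' <= C}.
  move=> V VS'; case/predU1P: (SUC V (mem_rem VS')) => // EV.
  by move: VS'; rewrite EV mem_rem_uniqF.
rewrite (perm_big _ eqS) big_cons /= dimv_disjoint_sum; last first.
  by apply: disjU; rewrite ?rem_uniq //; move: sizeS; rewrite (perm_size eqS).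
move: sizeS; rewrite dimU (perm_size eqS) mulnS leq_add2l /= ltnS => sizeS'.
by apply: indC => //; [exact: rem_uniq | exact: ltnW].
Qed.
End IndependentCodes.

Section Greedy.
Variables (F : finFieldType) (n k a : nat).
Hypotheses (k_gt0 : 0 < k) (a_gt0 : 0 < a) (akn : a.+1 * k <= n).
Local Notation q := #|F|.

Lemma independent_code_extend (C : seq {vspace 'rV[F]_n}) :
  independent_code k a C ->
  'C(size C, a) * (q ^ k - 1) * q ^ (a * k) < (q - 1) * q ^ n ->
  exists U, independent_code k a (U :: C).
Proof.
move=> codeC lt_count; have [uC dimC _] := codeC.
(* Any at most a codewords lie in a sum of exactly m of them; taking
   m = minn a N keeps such m-subsets available when N < a. *)
set N := size C; set m := minn a N.
pose W (s : {set 'I_N}) := (\sum_(i in s) nth 0%VS C i)%VS.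
have dimW (s : {set 'I_N}) : #|s| == m -> \dim (W s) <= a * k.
  move=> /eqP sm; apply: leq_trans (dimv_leq_sum _ _ _) _.
  rewrite (eq_bigr (fun _ => k)) => [|i _]; last by rewrite dimC ?mem_nth.
  by rewrite sum_nat_const sm leq_mul2r geq_minl orbT.
have count_m : #|[pred s : {set 'I_N} | #|s| == m]| * (q ^ k - 1) * q ^ (a * k) <
               (q - 1) * q ^ n.
  rewrite -cardsE card_draws card_ord /m.
  case: (leqP a N) => // _.
  by rewrite binn mul1n expn_sub1_mul_ltn ?finNzRing_gt1.
have [M avoidM] := exists_mx_avoiding dimW count_m.
have injM (c : 'rV[F]_k) : (c *m M = 0 -> c = 0)%R.
  have [s0 _ s0m] : exists2 s0 : {set 'I_N}, set0 \subset s0 & #|s0| = m.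
    by apply: exists_superset_card; rewrite cards0 card_ord geq_minr.
  move=> cM0; apply/eqP; apply: contraT => c0.
  by have := avoidM s0 c; rewrite /= s0m eqxx cM0 mem0v => /(_ isT c0).
exists (row_vspace M); apply: independent_code_cons => //; first exact: dim_row_vspace.
move=> S uS Sa SC.
have [s sm sumS] : exists2 s : {set 'I_N}, #|s| = m & (\sum_(V <- S) V <= W s)%VS.
  by apply: sum_sub_draw; rewrite // leq_min Sa uniq_leq_size // geq_minr.
apply/eqP; rewrite -subv0; apply/subvP => u /memv_capP [/row_vspaceP [c ->] cMS].
have [->|c0] := eqVneq c 0%R; first by rewrite mul0mx mem0v.
by have := avoidM s c; rewrite /= sm eqxx (subvP sumS _ cMS) => /(_ isT c0).
Qed.

Lemma independent_code_greedy N :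
  (forall N', N' < N -> 'C(N', a) * (q ^ k - 1) * q ^ (a * k) < (q - 1) * q ^ n) ->
  exists C : seq {vspace 'rV[F]_n}, independent_code k a C /\ size C = N.
Proof.
elim: N => [_|N IH ltN]; first by exists [::]; split; first exact: independent_code_nil.
have [C [codeC sizeC]] := IH (fun N' ltN'N => ltN N' (leqW ltN'N)).
have [|U codeUC] := independent_code_extend codeC; first by rewrite sizeC ltN.
by exists (U :: C); rewrite /= sizeC.
Qed.
End Greedy.

Lemma exists_large_independent_code (F : finFieldType) (n k a : nat) :
  0 < k -> 1 < a -> a.+1 * k <= n ->
  exists C : seq {vspace 'rV[F]_n},
    independent_code k a C /\ #|F| ^ (n - a.+1 * k).+1 <= size C ^ a.
Proof.
move=> k_gt0 a_gt1 akn; have q_gt1 := finNzRing_gt1 F.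
pose extensible N := 'C(N, a) * (#|F| ^ k - 1) * #|F| ^ (a * k) < (#|F| - 1) * #|F| ^ n.
have stuck_exists : exists N, ~~ extensible N.
  exists ((#|F| - 1) * #|F| ^ n + a); rewrite /extensible -leqNgt -mulnA.
  apply: leq_trans (ltnW (ltn_bin_addn _ (ltnW a_gt1))) (leq_pmulr _ _).
  by rewrite muln_gt0 expn_gt0 (ltnW q_gt1) subn_gt0 andbT -{1}(exp1n k) ltn_exp2r.
case: (@ex_minnP (fun N => ~~ extensible N) stuck_exists) => Ns stuckNs minNs.
have [|C [codeC sizeC]] := @independent_code_greedy F n k a k_gt0 (ltnW a_gt1) akn Ns.
  by move=> N' ltN'; apply: contraLR ltN' => /minNs; rewrite -leqNgt.
exists C; split => //; rewrite sizeC; apply/ltnW/(leq_trans _ (double_bin_leq_expn Ns a_gt1)).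
by apply: greedy_stop_bound; rewrite // leqNgt.
Qed.

From Stdlib Require Import Reals.

Lemma INR_expn m e : INR (expn m e) = (INR m ^ e)%R.
Proof. by elim: e => [|e IH]; rewrite ?expn0 // expnS mult_INR IH. Qed.

Lemma Rpower_div_le (x y : R) (e a : nat) : (0 < x)%R -> (0 <= y)%R -> 0 < a ->
  (x ^ e <= y ^ a)%R -> (Rpower x (INR e / INR a) <= y)%R.
Proof.
move=> x_gt0 y_ge0 a_gt0 le_xy.
have aR_gt0 : (0 < INR a)%R by apply/lt_0_INR/ltP.
have y_gt0 : (0 < y)%R.
  case: (Rle_lt_or_eq_dec _ _ y_ge0) => // y0; move: le_xy; rewrite -y0 pow_i; last exact/ltP.
  by move/(Rlt_le_trans _ _ _ (pow_lt _ e x_gt0))/Rlt_irrefl.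
rewrite /Rdiv -Rpower_mult Rpower_pow // -[y](Rpower_1 y) // -(Rinv_r (INR a)); last first.
  exact/not_0_INR/eqP/lt0n_neq0.
rewrite -Rpower_mult Rpower_pow //.
apply: Rle_Rpower_l; [exact/Rlt_le/Rinv_0_lt_compat | split => //; exact: pow_lt].
Qed.

Theorem mainTheorem14 (F : finFieldType) (n k alpha : nat) :
  0 < n -> 0 < k -> 0 < alpha -> k %| n -> 3 <= alpha -> alpha * k <= n ->
  B_ge F n k ((alpha - 1) * k) alpha
    (Rpower (INR #|F|) (INR (n - alpha * k + 1) / INR (alpha - 1))).
Proof.
move=> _ k_gt0 _ _; case: alpha => [//|a] a_gt1 akn; rewrite subSS subn0 addn1.
have [C [codeC sizeC]] := exists_large_independent_code F k_gt0 a_gt1 akn.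
exists C; split; first exact: independent_code_covering.
apply: Rpower_div_le; [exact/lt_0_INR/ltP/ltnW/finNzRing_gt1 | exact: pos_INR | exact: ltnW |].
by rewrite -!INR_expn; apply/le_INR/leP.
Qed.
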